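(* Let $k\ge2$ and $-\frac{\pi}{2}\le\theta_1<\theta_2<\dots<\theta_k\le\frac{\pi}{2}$, $\theta_{\min}=\min_{p\ne j}|\theta_p-\theta_j|$, and $V_k(k-1)=(\phi_{k-1}(e^{i\theta_1}),\dots,\phi_{k-1}(e^{i\theta_k}))$. Then $$\|V_k(k-1)^{-1}\|_\infty\le\frac{\pi^{k-1}}{\zeta(k)\,\theta_{\min}^{k-1}}.$$
   Context: $\phi_s(z)=(1,z,\dots,z^s)^T$. For an integer $k\ge1$, $\zeta(k)=\big((\tfrac{k-1}{2})!\big)^2$ if $k$ is odd and $\zeta(k)=(\tfrac{k}{2})!(\tfrac{k-2}{2})!$ if $k$ is even. $\|\cdot\|_\infty$ is the matrix norm induced by the vector $\ell^\infty$ norm (maximum absolute row sum). *)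

From Stdlib Require Import Reals Arith.
Open Scope R_scope.

(* Complex numbers as (real part, imaginary part). *)
Definition C : Type := (R * R)%type.
Definition C0 : C := (0, 0).
Definition C1 : C := (1, 0).
Definition Cadd (z w : C) : C := (fst z + fst w, snd z + snd w).
Definition Cmul (z w : C) : C :=
  (fst z * fst w - snd z * snd w, fst z * snd w + snd z * fst w).
Fixpoint Cpow (z : C) (n : nat) : C :=
  match n with O => C1 | S n => Cmul z (Cpow z n) end.
Definition Cmod (z : C) : R := sqrt (fst z * fst z + snd z * snd z).
Definition Cexpi (t : R) : C := (cos t, sin t).

Fixpoint Csum (n : nat) (f : nat -> C) : C :=
  match n with O => C0 | S n => Cadd (Csum n f) (f n) end.

(* k x k complex matrices: entries A i j for i, j < k (0-based). *)
Definition Cmat := nat -> nat -> C.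
Definition mmul (k : nat) (A B : Cmat) : Cmat :=
  fun i j => Csum k (fun l => Cmul (A i l) (B l j)).
Definition is_inverse (k : nat) (A W : Cmat) : Prop :=
  forall i j, (i < k)%nat -> (j < k)%nat ->
    mmul k A W i j = (if Nat.eqb i j then C1 else C0) /\
    mmul k W A i j = (if Nat.eqb i j then C1 else C0).

Fixpoint Rsum (n : nat) (f : nat -> R) : R :=
  match n with O => 0 | S n => Rsum n f + f n end.
Fixpoint Rmax_upto (n : nat) (f : nat -> R) : R :=
  match n with O => 0 | S n => Rmax (Rmax_upto n f) (f n) end.
(* induced l^infty matrix norm: maximum absolute row sum *)
Definition norm_inf (k : nat) (A : Cmat) : R :=
  Rmax_upto k (fun i => Rsum k (fun j => Cmod (A i j))).

(* V_k(k-1) = (phi_{k-1}(e^{i th_1}), ..., phi_{k-1}(e^{i th_k})):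
   column j is (1, z_j, ..., z_j^{k-1}) with z_j = e^{i th_j}; th is 0-based. *)
Definition Vand (th : nat -> R) : Cmat := fun p j => Cpow (Cexpi (th j)) p.

Definition zeta (k : nat) : nat :=
  if Nat.odd k then (fact ((k - 1) / 2) * fact ((k - 1) / 2))%nat
  else (fact (k / 2) * fact ((k - 2) / 2))%nat.

Definition is_min_sep (k : nat) (th : nat -> R) (m : R) : Prop :=
  (exists p j, (p < k)%nat /\ (j < k)%nat /\ p <> j /\ m = Rabs (th p - th j)) /\
  (forall p j, (p < k)%nat -> (j < k)%nat -> p <> j -> m <= Rabs (th p - th j)).

(* The inverse of the Vandermonde matrix is given row by row by the coefficients
   of the Lagrange basis polynomials
   L_j(x) = prod_{l <> j} (x - z_l) / prod_{l <> j} (z_j - z_l).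
   The coefficients of prod_{l <> j} (x - z_l) have absolute sum at most
   prod_{l <> j} (1 + |z_l|) = 2^(k-1) for unimodular nodes, while by Jordan's
   inequality |e^(i a) - e^(i b)| >= 2 |a - b| / pi >= (2 theta_min / pi) |j - l|.
   Hence each row sum is at most (pi / theta_min)^(k-1) / (j! (k-1-j)!), and the
   balanced split j = (k-1)/2 minimizes j! (k-1-j)!, giving zeta(k). *)
From Stdlib Require Import Reals Arith List Lia Lra Psatz.
From Coquelicot Require Complex.
Import ListNotations.
Open Scope R_scope.

Definition Copp (z : C) : C := (- fst z, - snd z).
Definition Csub (z w : C) : C := Cadd z (Copp w).
Definition Cinv (z : C) : C := Complex.Cinv z.
Definition Cdiv (z w : C) : C := Cmul z (Cinv w).

Lemma C_field : field_theory C0 C1 Cadd Cmul Csub Copp Cdiv Cinv eq.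
Proof. exact Complex.C_field_theory. Qed.
Add Field C_field : C_field.

Lemma Cmul_eq0 z w : Cmul z w = C0 -> z <> C0 -> w = C0.
Proof.
  intros Hzw Hz. replace w with (Cmul (Cinv z) (Cmul z w)) by (field; exact Hz).
  rewrite Hzw. ring.
Qed.

Lemma Csub_eq0 z w : Csub z w = C0 -> z = w.
Proof. intros H. replace z with (Cadd (Csub z w) w) by ring. rewrite H. ring. Qed.

Lemma Cmod_Coquelicot_Cmod z : Cmod z = Complex.Cmod z.
Proof. unfold Cmod, Complex.Cmod. f_equal. simpl. ring. Qed.

Lemma Cmod_ge0 z : 0 <= Cmod z.
Proof. apply sqrt_pos. Qed.

Lemma Cmod_gt0 z : z <> C0 -> 0 < Cmod z.
Proof. rewrite Cmod_Coquelicot_Cmod. apply Complex.Cmod_gt_0. Qed.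

Lemma Cmod_C0 : Cmod C0 = 0.
Proof. unfold Cmod; simpl. rewrite Rmult_0_l, Rplus_0_l. exact sqrt_0. Qed.

Lemma Cmod_C1 : Cmod C1 = 1.
Proof. unfold Cmod; simpl. rewrite Rmult_0_l, Rplus_0_r, Rmult_1_l. exact sqrt_1. Qed.

Lemma Cmod_mul z w : Cmod (Cmul z w) = Cmod z * Cmod w.
Proof. rewrite !Cmod_Coquelicot_Cmod. exact (Complex.Cmod_mult z w). Qed.

Lemma Cmod_inv z : z <> C0 -> Cmod (Cinv z) = / Cmod z.
Proof. rewrite !Cmod_Coquelicot_Cmod. exact (Complex.Cmod_inv z). Qed.

Lemma Cmod_sub_le z w : Cmod (Csub z w) <= Cmod z + Cmod w.
Proof.
  rewrite !Cmod_Coquelicot_Cmod, <- (Complex.Cmod_opp w).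
  exact (Complex.Cmod_triangle z (Complex.Copp w)).
Qed.

Lemma Cmod_expi t : Cmod (Cexpi t) = 1.
Proof.
  unfold Cmod, Cexpi; simpl. rewrite <- sqrt_1. f_equal.
  pose proof (sin2_cos2 t) as H. unfold Rsqr in H. lra.
Qed.

Lemma Csum_ext n f g : (forall i, (i < n)%nat -> f i = g i) -> Csum n f = Csum n g.
Proof.
  induction n as [|n IH]; intros H; simpl; [reflexivity|].
  rewrite IH, H by (intros; try apply H; lia). reflexivity.
Qed.

Lemma Csum_eq0 n f : (forall i, (i < n)%nat -> f i = C0) -> Csum n f = C0.
Proof.
  induction n as [|n IH]; intros H; simpl; [reflexivity|].
  rewrite IH, H by (intros; try apply H; lia). ring.
Qed.

Lemma Csum_add n f g : Csum n (fun i => Cadd (f i) (g i)) = Cadd (Csum n f) (Csum n g).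
Proof. induction n as [|n IH]; simpl; [|rewrite IH]; ring. Qed.

Lemma Csum_sub n f g : Csum n (fun i => Csub (f i) (g i)) = Csub (Csum n f) (Csum n g).
Proof. induction n as [|n IH]; simpl; [|rewrite IH]; ring. Qed.

Lemma Csum_mull n f c : Csum n (fun i => Cmul c (f i)) = Cmul c (Csum n f).
Proof. induction n as [|n IH]; simpl; [|rewrite IH]; ring. Qed.

Lemma Csum_mulr n f c : Csum n (fun i => Cmul (f i) c) = Cmul (Csum n f) c.
Proof. induction n as [|n IH]; simpl; [|rewrite IH]; ring. Qed.

Lemma Csum_first n f : Csum (S n) f = Cadd (f 0%nat) (Csum n (fun i => f (S i))).
Proof.
  induction n as [|n IH]; [simpl; ring|].
  change (Csum (S (S n)) f) with (Cadd (Csum (S n) f) (f (S n))).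
  rewrite IH. simpl. ring.
Qed.

Lemma Csum_swap n m (f : nat -> nat -> C) :
  Csum n (fun a => Csum m (f a)) = Csum m (fun b => Csum n (fun a => f a b)).
Proof.
  induction n as [|n IH]; simpl.
  - symmetry. apply Csum_eq0. reflexivity.
  - rewrite IH, <- Csum_add. reflexivity.
Qed.

Lemma Rsum_ext n f g : (forall i, (i < n)%nat -> f i = g i) -> Rsum n f = Rsum n g.
Proof.
  induction n as [|n IH]; intros H; simpl; [reflexivity|].
  rewrite IH, H by (intros; try apply H; lia). reflexivity.
Qed.

Lemma Rsum_le n f g : (forall i, (i < n)%nat -> f i <= g i) -> Rsum n f <= Rsum n g.
Proof.
  induction n as [|n IH]; intros H; simpl; [lra|].
  pose proof (H n (Nat.lt_succ_diag_r n)).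
  pose proof (IH (fun i Hi => H i (Nat.lt_lt_succ_r i n Hi))). lra.
Qed.

Lemma Rsum_add n f g : Rsum n (fun i => f i + g i) = Rsum n f + Rsum n g.
Proof. induction n as [|n IH]; simpl; [|rewrite IH]; ring. Qed.

Lemma Rsum_mull n f c : Rsum n (fun i => c * f i) = c * Rsum n f.
Proof. induction n as [|n IH]; simpl; [|rewrite IH]; ring. Qed.

Lemma Rsum_first n f : Rsum (S n) f = f 0%nat + Rsum n (fun i => f (S i)).
Proof.
  induction n as [|n IH]; [simpl; ring|].
  change (Rsum (S (S n)) f) with (Rsum (S n) f + f (S n)).
  rewrite IH. simpl. ring.
Qed.

Lemma Rmax_upto_le n f B : 0 <= B -> (forall i, (i < n)%nat -> f i <= B) -> Rmax_upto n f <= B.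
Proof.
  intros HB. induction n as [|n IH]; intros H; simpl; [exact HB|].
  apply Rmax_lub; [apply IH; intros; apply H; lia | apply H; lia].
Qed.

Definition idm (i j : nat) : C := if Nat.eqb i j then C1 else C0.

Lemma Csum_mul_idm_r n f i : (i < n)%nat -> Csum n (fun l => Cmul (f l) (idm l i)) = f i.
Proof.
  unfold idm. induction n as [|n IH]; intros Hi; [lia|]. simpl.
  destruct (Nat.eqb_spec n i) as [->|Hni].
  - rewrite Csum_eq0; [ring|]. intros l Hl. destruct (Nat.eqb_spec l i); [lia|ring].
  - rewrite IH by lia. ring.
Qed.

Lemma Csum_mul_idm_l n f i : (i < n)%nat -> Csum n (fun l => Cmul (idm i l) (f l)) = f i.
Proof.
  intros Hi. rewrite <- (Csum_mul_idm_r n f i Hi). apply Csum_ext. intros l _.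
  unfold idm. rewrite Nat.eqb_sym. ring.
Qed.

Lemma mmul_assoc k (A B D : Cmat) i j :
  mmul k (mmul k A B) D i j = mmul k A (mmul k B D) i j.
Proof.
  unfold mmul.
  transitivity (Csum k (fun l => Csum k (fun r => Cmul (A i r) (Cmul (B r l) (D l j))))).
  - apply Csum_ext. intros l _. rewrite <- Csum_mulr. apply Csum_ext. intros r _. ring.
  - rewrite Csum_swap. apply Csum_ext. intros r _. apply Csum_mull.
Qed.

(** * Polynomials *)

(* Polynomials are coefficient sequences, of which [peval c n] reads only the first n. *)
Definition peval (c : nat -> C) (n : nat) (x : C) : C :=
  Csum n (fun q => Cmul (c q) (Cpow x q)).

Definition pmul_Xsub (p : nat -> C) (a : C) : nat -> C :=
  fun i => Csub (match i with O => C0 | S i => p i end) (Cmul a (p i)).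

Lemma peval_pmul_Xsub p a n x : p n = C0 ->
  peval (pmul_Xsub p a) (S n) x = Cmul (peval p n x) (Csub x a).
Proof.
  intros Hn. unfold peval, pmul_Xsub.
  rewrite (Csum_ext _ _ (fun q => Csub (Cmul (match q with O => C0 | S i => p i end) (Cpow x q))
                                       (Cmul a (Cmul (p q) (Cpow x q))))) by (intros; ring).
  rewrite Csum_sub, Csum_mull, Csum_first.
  rewrite (Csum_ext n _ (fun q => Cmul x (Cmul (p q) (Cpow x q)))) by (intros; simpl; ring).
  rewrite Csum_mull. simpl. rewrite Hn. ring.
Qed.

(* Horner coefficients of the quotient of c (of size n+1) by x - a. *)
Definition pquo_Xsub (c : nat -> C) (a : C) (n i : nat) : C :=
  Csum (n - i) (fun t => Cmul (c (S i + t)%nat) (Cpow a t)).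

Lemma pquo_Xsub_high c a n i : (n <= i)%nat -> pquo_Xsub c a n i = C0.
Proof. intros H. unfold pquo_Xsub. replace (n - i)%nat with 0%nat by lia. reflexivity. Qed.

Lemma pquo_Xsub_step c a n i : (i < n)%nat ->
  pquo_Xsub c a n i = Cadd (c (S i)) (Cmul a (pquo_Xsub c a n (S i))).
Proof.
  intros H. unfold pquo_Xsub. replace (n - i)%nat with (S (n - S i)) by lia.
  rewrite Csum_first, <- Csum_mull, Nat.add_0_r. simpl Cpow. f_equal; [ring|].
  apply Csum_ext. intros t _. rewrite <- plus_n_Sm. simpl. ring.
Qed.

Lemma factor_theorem c a n x :
  peval c (S n) x = Cadd (Cmul (peval (pquo_Xsub c a n) n x) (Csub x a)) (peval c (S n) a).
Proof.
  set (q := pquo_Xsub c a n).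
  assert (Hdiv : forall y, peval c (S n) y =
                  Cadd (Cmul (peval q n y) (Csub y a)) (Cadd (c 0%nat) (Cmul a (q 0%nat)))).
  { intros y. rewrite <- peval_pmul_Xsub by (apply pquo_Xsub_high; lia).
    unfold peval. rewrite !Csum_first.
    rewrite (Csum_ext n (fun i => Cmul (pmul_Xsub q a (S i)) _) (fun i => Cmul (c (S i)) (Cpow y (S i)))).
    - unfold pmul_Xsub. simpl. ring.
    - intros i Hi. unfold pmul_Xsub, q. rewrite (pquo_Xsub_step c a n i Hi). ring. }
  rewrite (Hdiv x), (Hdiv a). f_equal. replace (Csub a a) with C0 by ring. ring.
Qed.

Lemma poly_roots_eq0 n : forall (c w : nat -> C),
  (forall i j, (i < n)%nat -> (j < n)%nat -> i <> j -> w i <> w j) ->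
  (forall i, (i < n)%nat -> peval c n (w i) = C0) ->
  forall q, (q < n)%nat -> c q = C0.
Proof.
  induction n as [|n IH]; intros c w Hw Hroot q Hq; [lia|].
  set (a := w n).
  assert (Ha : peval c (S n) a = C0) by exact (Hroot n (Nat.lt_succ_diag_r n)).
  assert (Hquo : forall i, pquo_Xsub c a n i = C0).
  { intros i. destruct (Nat.lt_ge_cases i n) as [Hi|Hi]; [|exact (pquo_Xsub_high c a n i Hi)].
    apply (IH _ w); [intros; apply Hw; lia| |exact Hi].
    intros i' Hi'. apply (Cmul_eq0 (Csub (w i') a)).
    - pose proof (Hroot i' ltac:(lia)) as E. rewrite (factor_theorem c a n), Ha in E.
      rewrite <- E. ring.
    - intros E. apply (Hw i' n); [lia|lia|lia|]. exact (Csub_eq0 _ _ E). }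
  assert (Hc : forall i, (i < n)%nat -> c (S i) = C0).
  { intros i Hi. pose proof (pquo_Xsub_step c a n i Hi) as E. rewrite !Hquo in E.
    rewrite E. ring. }
  destruct q as [|q]; [|apply Hc; lia].
  unfold peval in Ha. rewrite Csum_first, Csum_eq0 in Ha.
  - rewrite <- Ha. simpl. ring.
  - intros i Hi. rewrite Hc by exact Hi. ring.
Qed.

Definition Cprod (l : list C) : C := fold_right Cmul C1 l.
Definition Rprod (l : list R) : R := fold_right Rmult 1 l.

Lemma Cprod_neq0 l : (forall x, In x l -> x <> C0) -> Cprod l <> C0.
Proof.
  induction l as [|x l IH]; intros H; simpl.
  - intros E. injection E. lra.
  - intros E. apply (IH (fun y Hy => H y (or_intror Hy))).
    apply (Cmul_eq0 x); [exact E | apply H; left; reflexivity].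
Qed.

Lemma Cprod_eq0 l : In C0 l -> Cprod l = C0.
Proof.
  induction l as [|x l IH]; simpl; [tauto|].
  intros [->|H]; [|rewrite IH by exact H]; ring.
Qed.

Lemma Cmod_Cprod l : Cmod (Cprod l) = Rprod (map Cmod l).
Proof.
  induction l as [|x l IH]; simpl; [exact Cmod_C1|].
  rewrite Cmod_mul, IH. reflexivity.
Qed.

Lemma Rprod_app l1 l2 : Rprod (l1 ++ l2) = Rprod l1 * Rprod l2.
Proof. induction l1 as [|x l IH]; simpl; [|rewrite IH]; ring. Qed.

Lemma Rprod_nonneg (l : list R) : (forall x, In x l -> 0 <= x) -> 0 <= Rprod l.
Proof.
  induction l as [|x l IH]; intros H; simpl; [lra|].
  apply Rmult_le_pos; [apply H; left; reflexivity | apply IH; intros; apply H; right; assumption].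
Qed.

Lemma Rprod_le {A} (l : list A) f g :
  (forall x, In x l -> 0 <= f x <= g x) -> Rprod (map f l) <= Rprod (map g l).
Proof.
  induction l as [|x l IH]; intros H; simpl; [lra|].
  assert (Hl : forall y, In y l -> 0 <= f y <= g y) by (intros; apply H; right; assumption).
  assert (Hf : 0 <= Rprod (map f l)).
  { apply Rprod_nonneg. intros y Hy. apply in_map_iff in Hy as [a [<- Ha]]. apply Hl, Ha. }
  pose proof (H x (or_introl eq_refl)). pose proof (IH Hl).
  apply Rmult_le_compat; lra.
Qed.

Lemma Rprod_const {A} (l : list A) c : Rprod (map (fun _ => c) l) = c ^ length l.
Proof. induction l as [|x l IH]; simpl; [|rewrite IH]; reflexivity. Qed.

Lemma Rprod_scale {A} (l : list A) c f :
  Rprod (map (fun x => c * f x) l) = c ^ length l * Rprod (map f l).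
Proof. induction l as [|x l IH]; simpl; [|rewrite IH]; ring. Qed.

Fixpoint prod_Xsub (s : list C) : nat -> C :=
  match s with
  | [] => idm 0
  | a :: s => pmul_Xsub (prod_Xsub s) a
  end.

Lemma prod_Xsub_high s i : (length s < i)%nat -> prod_Xsub s i = C0.
Proof.
  revert i. induction s as [|a s IH]; intros i Hi; simpl in *.
  - unfold idm. destruct i; [lia|reflexivity].
  - unfold pmul_Xsub. destruct i as [|i]; [lia|]. rewrite !IH by lia. ring.
Qed.

Lemma peval_prod_Xsub s x :
  peval (prod_Xsub s) (S (length s)) x = Cprod (map (fun a => Csub x a) s).
Proof.
  induction s as [|a s IH]; simpl.
  - unfold peval, idm. simpl. ring.
  - rewrite peval_pmul_Xsub, IH by (apply prod_Xsub_high; lia). ring.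
Qed.

Definition coef_norm (c : nat -> C) (n : nat) : R := Rsum n (fun q => Cmod (c q)).

Lemma coef_norm_pmul_Xsub p a n : p n = C0 ->
  coef_norm (pmul_Xsub p a) (S n) <= (1 + Cmod a) * coef_norm p n.
Proof.
  intros Hn. unfold coef_norm.
  apply Rle_trans with
    (Rsum (S n) (fun q => Cmod (match q with O => C0 | S i => p i end) + Cmod a * Cmod (p q))).
  - apply Rsum_le. intros i _. unfold pmul_Xsub. rewrite <- Cmod_mul. apply Cmod_sub_le.
  - rewrite Rsum_add, Rsum_mull, Rsum_first. simpl. rewrite Hn, Cmod_C0. lra.
Qed.

Lemma coef_norm_prod_Xsub s :
  coef_norm (prod_Xsub s) (S (length s)) <= Rprod (map (fun a => 1 + Cmod a) s).
Proof.
  induction s as [|a s IH]; simpl.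
  - unfold coef_norm, idm. simpl. rewrite Cmod_C1. lra.
  - eapply Rle_trans; [apply coef_norm_pmul_Xsub, prod_Xsub_high; lia|].
    pose proof (Cmod_ge0 a). apply Rmult_le_compat_l; lra.
Qed.

(** * The inverse Vandermonde matrix *)

Definition others (j n : nat) : list nat := seq 0 j ++ seq (S j) (n - S j).

Lemma in_others j n l : (j < n)%nat -> In l (others j n) <-> (l < n)%nat /\ l <> j.
Proof. intros Hj. unfold others. rewrite in_app_iff, !in_seq. lia. Qed.

Lemma others_length j n : (j < n)%nat -> length (others j n) = (n - 1)%nat.
Proof. intros Hj. unfold others. rewrite length_app, !length_seq. lia. Qed.

Section Vandermonde.

Variable z : nat -> C.
Variable k : nat.

Definition vander : Cmat := fun p j => Cpow (z j) p.

Definition lagrange_num (j : nat) : nat -> C := prod_Xsub (map z (others j k)).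
Definition lagrange_den (j : nat) : C := Cprod (map (fun l => Csub (z j) (z l)) (others j k)).
Definition vander_inv : Cmat := fun j q => Cdiv (lagrange_num j q) (lagrange_den j).

Hypothesis z_inj : forall a b, (a < k)%nat -> (b < k)%nat -> a <> b -> z a <> z b.

Lemma lagrange_den_neq0 j : (j < k)%nat -> lagrange_den j <> C0.
Proof.
  intros Hj. apply Cprod_neq0. intros x Hx E.
  apply in_map_iff in Hx as [l [<- Hl]]. apply (in_others _ _ _ Hj) in Hl as [Hl Hlj].
  exact (z_inj j l Hj Hl (not_eq_sym Hlj) (Csub_eq0 _ _ E)).
Qed.

Lemma lagrange_num_size j : (j < k)%nat -> S (length (map z (others j k))) = k.
Proof. intros Hj. rewrite length_map, others_length by exact Hj. lia. Qed.

Lemma peval_lagrange_num j x : (j < k)%nat ->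
  peval (lagrange_num j) k x = Cprod (map (fun l => Csub x (z l)) (others j k)).
Proof.
  intros Hj. pose proof (peval_prod_Xsub (map z (others j k)) x) as E.
  rewrite lagrange_num_size, map_map in E by exact Hj. exact E.
Qed.

Lemma vander_inv_mul_vander j i : (j < k)%nat -> (i < k)%nat ->
  mmul k vander_inv vander j i = idm j i.
Proof.
  intros Hj Hi.
  transitivity (Cdiv (peval (lagrange_num j) k (z i)) (lagrange_den j)).
  { unfold mmul, peval, Cdiv. rewrite <- Csum_mulr. apply Csum_ext. intros.
    unfold vander_inv, vander, Cdiv. ring. }
  rewrite peval_lagrange_num by exact Hj. pose proof (lagrange_den_neq0 j Hj). unfold idm.
  destruct (Nat.eqb_spec j i) as [<-|Hji].
  - fold (lagrange_den j). field. assumption.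
  - rewrite Cprod_eq0; [unfold Cdiv; ring|].
    apply in_map_iff. exists i. split; [ring|]. apply in_others; lia.
Qed.

Lemma vander_mul_vander_inv p q : (p < k)%nat -> (q < k)%nat ->
  mmul k vander vander_inv p q = idm p q.
Proof.
  intros Hp Hq.
  set (M := fun l => Csub (mmul k vander vander_inv p l) (idm p l)).
  assert (HM : forall i, (i < k)%nat -> peval M k (z i) = C0).
  { intros i Hi. unfold peval, M.
    transitivity (Csub (mmul k (mmul k vander vander_inv) vander p i) (mmul k idm vander p i)).
    - unfold mmul. rewrite <- Csum_sub. apply Csum_ext. intros. unfold vander at 3 4. ring.
    - rewrite mmul_assoc. unfold mmul at 1 3.
      rewrite (Csum_ext _ _ (fun l => Cmul (vander p l) (idm l i)))
        by (intros; rewrite vander_inv_mul_vander by assumption; reflexivity).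
      rewrite Csum_mul_idm_r, Csum_mul_idm_l by assumption. ring. }
  apply Csub_eq0, (poly_roots_eq0 k M z z_inj HM q Hq).
Qed.

Lemma vander_inv_inverse : is_inverse k vander vander_inv.
Proof.
  intros i j Hi Hj.
  split; [apply vander_mul_vander_inv | apply vander_inv_mul_vander]; assumption.
Qed.

Lemma inverse_eq_vander_inv W : is_inverse k vander W ->
  forall j q, (j < k)%nat -> (q < k)%nat -> W j q = vander_inv j q.
Proof.
  intros HW j q Hj Hq.
  transitivity (mmul k (mmul k vander_inv vander) W j q).
  - transitivity (Csum k (fun r => Cmul (idm j r) (W r q))).
    + symmetry. exact (Csum_mul_idm_l k (fun r => W r q) j Hj).
    + apply Csum_ext. intros r Hr. rewrite vander_inv_mul_vander by assumption. reflexivity.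
  - rewrite mmul_assoc.
    transitivity (Csum k (fun l => Cmul (vander_inv j l) (idm l q))).
    + apply Csum_ext. intros l Hl. f_equal. exact (proj1 (HW l q Hl Hq)).
    + apply Csum_mul_idm_r. exact Hq.
Qed.

Lemma row_norm_vander_inv j : (j < k)%nat ->
  Rsum k (fun q => Cmod (vander_inv j q)) <=
  Rprod (map (fun l => 1 + Cmod (z l)) (others j k)) /
  Rprod (map (fun l => Cmod (Csub (z j) (z l))) (others j k)).
Proof.
  intros Hj. pose proof (lagrange_den_neq0 j Hj) as Hden.
  replace (Rprod (map (fun l => Cmod (Csub (z j) (z l))) (others j k)))
    with (Cmod (lagrange_den j)) by (unfold lagrange_den; rewrite Cmod_Cprod, map_map; reflexivity).
  rewrite (Rsum_ext _ _ (fun q => / Cmod (lagrange_den j) * Cmod (lagrange_num j q)))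
    by (intros; unfold vander_inv, Cdiv; rewrite Cmod_mul, Cmod_inv by exact Hden; ring).
  rewrite Rsum_mull, Rmult_comm.
  apply Rmult_le_compat_r; [left; apply Rinv_0_lt_compat, Cmod_gt0, Hden|].
  pose proof (coef_norm_prod_Xsub (map z (others j k))) as E.
  rewrite lagrange_num_size, map_map in E by exact Hj. exact E.
Qed.

End Vandermonde.

(** * Chords of the unit circle *)

Lemma PI_3_4 : 3 < PI <= 4.
Proof. pose proof PI2_3_2. pose proof PI_4. lra. Qed.

(* Jordan's inequality, from the degree-2 Taylor bound for cos near pi/2 and the
   degree-3 bound for sin near 0. *)
Lemma jordan x : 0 <= x <= PI / 2 -> 2 * x <= PI * sin x.
Proof.
  intros Hx. pose proof PI_3_4 as HPI.
  set (y := PI / 2 - x).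
  destruct (Rle_or_lt (y * PI) 4) as [Hy|Hy].
  - assert (Hcos : 1 - y * y / 2 <= cos y).
    { pose proof (proj1 (cos_bound y 0 ltac:(unfold y; lra) ltac:(unfold y; lra))) as H.
      unfold cos_approx, cos_term in H. simpl in H. lra. }
    assert (E : sin x = cos y) by (unfold y; rewrite cos_shift; reflexivity).
    rewrite E. assert (0 <= y) by (unfold y; lra). assert (2 * x = PI - 2 * y) by (unfold y; lra). nra.
  - assert (Hsin : x - x * x * x / 6 <= sin x).
    { pose proof (proj1 (sin_bound x 0 ltac:(lra) ltac:(lra))) as H.
      unfold sin_approx, sin_term in H. simpl in H. lra. }
    assert (x * PI < 4) by (unfold y in Hy; nra).
    assert (x < 4 / 3) by nra.
    assert (PI * (x * x) <= 6 * (PI - 2)) by nra.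
    nra.
Qed.

Lemma Cmod_expi_sub a b : Cmod (Csub (Cexpi a) (Cexpi b)) = 2 * Rabs (sin ((a - b) / 2)).
Proof.
  unfold Cmod, Csub, Cadd, Copp, Cexpi; simpl.
  replace (2 * Rabs (sin ((a - b) / 2))) with (Rabs (2 * sin ((a - b) / 2)))
    by (rewrite Rabs_mult, Rabs_right by lra; reflexivity).
  rewrite <- sqrt_Rsqr_abs. f_equal.
  pose proof (sin2_cos2 a). pose proof (sin2_cos2 b). pose proof (cos_minus a b) as Hab.
  replace (a - b) with (2 * ((a - b) / 2)) in Hab by field.
  rewrite cos_2a_sin in Hab. unfold Rsqr in *. nra.
Qed.

Lemma chord_lower_bound a b : Rabs (a - b) <= PI ->
  2 * Rabs (a - b) / PI <= Cmod (Csub (Cexpi a) (Cexpi b)).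
Proof.
  intros Hab. pose proof PI_3_4 as HPI. rewrite Cmod_expi_sub.
  set (u := (a - b) / 2).
  assert (Hu : Rabs (a - b) = 2 * Rabs u)
    by (unfold u, Rabs; repeat destruct Rcase_abs; lra).
  assert (Hsin : Rabs (sin u) = sin (Rabs u)).
  { destruct (Rle_or_lt 0 u) as [Hu0|Hu0].
    - rewrite (Rabs_right u) in Hu |- * by lra.
      apply Rabs_right, Rle_ge, sin_ge_0; lra.
    - rewrite (Rabs_left u) in Hu |- * by lra. rewrite sin_neg.
      apply Rabs_left1. pose proof (sin_ge_0 (- u) ltac:(lra) ltac:(lra)) as Hs.
      rewrite sin_neg in Hs. lra. }
  rewrite Hsin, Hu. pose proof (jordan (Rabs u) ltac:(split; [apply Rabs_pos|lra])) as Hj.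
  apply (Rmult_le_reg_r PI); [lra|]. unfold Rdiv. rewrite Rmult_assoc, Rinv_l by lra. nra.
Qed.

Lemma Rprod_dist_below j : Rprod (map (fun l => Rabs (INR j - INR l)) (seq 0 j)) = INR (fact j).
Proof.
  induction j as [|j IH]; [reflexivity|].
  change (seq 0 (S j)) with (0%nat :: seq 1 j).
  rewrite <- seq_shift, map_cons, map_map.
  rewrite (map_ext _ (fun l => Rabs (INR j - INR l))) by (intros; rewrite !S_INR; f_equal; ring).
  transitivity (Rabs (INR (S j) - INR 0) * Rprod (map (fun l => Rabs (INR j - INR l)) (seq 0 j)));
    [reflexivity|].
  rewrite IH, Rminus_0_r, Rabs_right by apply Rle_ge, pos_INR.
  change (fact (S j)) with (S j * fact j)%nat. apply eq_sym, mult_INR.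
Qed.

Lemma Rprod_dist_above j m :
  Rprod (map (fun l => Rabs (INR j - INR l)) (seq (S j) m)) = INR (fact m).
Proof.
  induction m as [|m IH]; [reflexivity|].
  rewrite seq_S, map_app, Rprod_app, IH. cbn [map]. unfold Rprod at 1. cbn [fold_right].
  replace (INR j - INR (S j + m)) with (- INR (S m)) by (rewrite !S_INR, plus_INR, S_INR; ring).
  rewrite Rmult_1_r, Rabs_Ropp, Rabs_right by apply Rle_ge, pos_INR.
  change (fact (S m)) with (S m * fact m)%nat. rewrite mult_INR. ring.
Qed.

Lemma Rprod_dist_others j n : (j < n)%nat ->
  Rprod (map (fun l => Rabs (INR j - INR l)) (others j n)) = INR (fact j * fact (n - 1 - j)).
Proof.
  intros Hj. unfold others.
  rewrite map_app, Rprod_app, Rprod_dist_below, Rprod_dist_above, mult_INR.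
  do 3 f_equal. lia.
Qed.

Lemma fact_mul_balanced n a : (a <= n)%nat ->
  (fact (n / 2) * fact (n - n / 2) <= fact a * fact (n - a))%nat.
Proof.
  pose proof (Nat.div_mod n 2 ltac:(lia)). pose proof (Nat.mod_upper_bound n 2 ltac:(lia)).
  assert (Hlow : forall m b, (b + m = n / 2)%nat ->
                  (fact (n / 2) * fact (n - n / 2) <= fact b * fact (n - b))%nat).
  { induction m as [|m IH]; intros b Hb.
    - replace b with (n / 2)%nat by lia. lia.
    - eapply Nat.le_trans; [apply (IH (S b)); lia|].
      replace (n - b)%nat with (S (n - S b)) by lia.
      assert (S b <= S (n - S b))%nat by lia. simpl fact. nia. }
  intros Ha. destruct (Nat.le_gt_cases a (n / 2)) as [Hle|Hgt].
  - apply (Hlow (n / 2 - a)%nat). lia.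
  - pose proof (Hlow (n / 2 - (n - a))%nat (n - a)%nat ltac:(lia)) as Hsym.
    replace (n - (n - a))%nat with a in Hsym by lia. lia.
Qed.

Lemma zeta_balanced k : (1 <= k)%nat ->
  zeta k = (fact ((k - 1) / 2) * fact (k - 1 - (k - 1) / 2))%nat.
Proof.
  intros Hk. unfold zeta. destruct (Nat.odd k) eqn:Hodd.
  - apply Nat.odd_spec in Hodd as [t Ht].
    replace ((k - 1) / 2)%nat with t by (apply (Nat.div_unique _ _ _ 0); lia).
    do 2 f_equal. lia.
  - assert (Heven : Nat.even k = true) by (rewrite <- Nat.negb_odd, Hodd; reflexivity).
    apply Nat.even_spec in Heven as [t Ht].
    replace ((k - 1) / 2)%nat with (t - 1)%nat by (apply (Nat.div_unique _ _ _ 1); lia).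
    replace (k / 2)%nat with t by (apply (Nat.div_unique _ _ _ 0); lia).
    replace ((k - 2) / 2)%nat with (t - 1)%nat by (apply (Nat.div_unique _ _ _ 0); lia).
    replace (k - 1 - (t - 1))%nat with t by lia. lia.
Qed.

Lemma zeta_le_fact k j : (j < k)%nat -> (zeta k <= fact j * fact (k - 1 - j))%nat.
Proof. intros Hj. rewrite zeta_balanced by lia. apply fact_mul_balanced. lia. Qed.

Lemma zeta_pos k : (0 < zeta k)%nat.
Proof.
  unfold zeta. pose proof (lt_O_fact ((k - 1) / 2)). pose proof (lt_O_fact (k / 2)).
  pose proof (lt_O_fact ((k - 2) / 2)). destruct (Nat.odd k); nia.
Qed.

(** * Separated nodes on the right half circle *)

Lemma incr_lt (f : nat -> R) n : (forall i, (i + 1 < n)%nat -> f i < f (i + 1)%nat) ->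
  forall i l, (i < l)%nat -> (l < n)%nat -> f i < f l.
Proof.
  intros Hf i l Hil. induction Hil as [|l Hil IH]; intros Hl.
  - rewrite <- Nat.add_1_r. apply Hf. lia.
  - eapply Rlt_trans; [apply IH; lia|]. rewrite <- Nat.add_1_r. apply Hf. lia.
Qed.

Lemma sum_of_gaps_ge (f : nat -> R) m n : (forall i, (i + 1 < n)%nat -> m <= f (i + 1)%nat - f i) ->
  forall i l, (i <= l)%nat -> (l < n)%nat -> INR (l - i) * m <= f l - f i.
Proof.
  intros Hf i l Hil. induction Hil as [|l Hil IH]; intros Hl.
  - rewrite Nat.sub_diag. simpl. lra.
  - replace (S l - i)%nat with (S (l - i)) by lia. rewrite S_INR.
    pose proof (IH ltac:(lia)). pose proof (Hf l ltac:(lia)) as Hgap.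
    rewrite Nat.add_1_r in Hgap. lra.
Qed.

Section UnitCircleNodes.

Variable k : nat.
Variable th : nat -> R.
Variable thmin : R.
Hypothesis th_first : - (PI / 2) <= th 0%nat.
Hypothesis th_last : th (k - 1)%nat <= PI / 2.
Hypothesis th_incr : forall i, (i + 1 < k)%nat -> th i < th (i + 1)%nat.
Hypothesis th_min_sep : is_min_sep k th thmin.

Let z (l : nat) : C := Cexpi (th l).

Lemma th_neq i l : (i < k)%nat -> (l < k)%nat -> i <> l -> th i <> th l.
Proof.
  intros Hi Hl Hil. destruct (Nat.lt_ge_cases i l) as [H|H]; [|apply not_eq_sym];
    apply Rlt_not_eq; apply (incr_lt th k th_incr); lia.
Qed.

Lemma thmin_pos : 0 < thmin.
Proof.
  destruct th_min_sep as [(p & j & Hp & Hj & Hpj & ->) _].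
  apply Rabs_pos_lt, Rminus_eq_contra, th_neq; assumption.
Qed.

Lemma th_range i : (i < k)%nat -> - (PI / 2) <= th i <= PI / 2.
Proof.
  intros Hi. split.
  - destruct i as [|i]; [lra|]. pose proof (incr_lt th k th_incr 0 (S i) ltac:(lia) Hi). lra.
  - destruct (Nat.eq_dec i (k - 1)) as [->|Hik]; [lra|].
    pose proof (incr_lt th k th_incr i (k - 1) ltac:(lia) ltac:(lia)). lra.
Qed.

Lemma th_sep_index j l : (j < k)%nat -> (l < k)%nat ->
  Rabs (INR j - INR l) * thmin <= Rabs (th j - th l).
Proof.
  assert (Hgap : forall i, (i + 1 < k)%nat -> thmin <= th (i + 1)%nat - th i).
  { intros i Hi. destruct th_min_sep as [_ Hsep].
    pose proof (Hsep (i + 1)%nat i Hi ltac:(lia) ltac:(lia)) as Hm. pose proof (th_incr i Hi).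
    rewrite Rabs_right in Hm by lra. exact Hm. }
  assert (Hle : forall j l, (j <= l)%nat -> (l < k)%nat ->
                 Rabs (INR j - INR l) * thmin <= Rabs (th j - th l)).
  { intros j' l' Hjl Hl. pose proof (sum_of_gaps_ge th thmin k Hgap j' l' Hjl Hl) as Hs.
    pose proof thmin_pos. pose proof (le_INR _ _ Hjl).
    rewrite minus_INR in Hs by exact Hjl.
    rewrite Rabs_minus_sym, (Rabs_minus_sym (th j')), !Rabs_right by nra. exact Hs. }
  intros Hj Hl. destruct (Nat.le_ge_cases j l) as [H|H]; [now apply Hle|].
  rewrite Rabs_minus_sym, (Rabs_minus_sym (th j)). now apply Hle.
Qed.

Lemma node_dist_lower j l : (j < k)%nat -> (l < k)%nat ->
  2 * thmin / PI * Rabs (INR j - INR l) <= Cmod (Csub (z j) (z l)).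
Proof.
  intros Hj Hl. pose proof PI_3_4. pose proof (th_range j Hj). pose proof (th_range l Hl).
  eapply Rle_trans; [|apply chord_lower_bound; unfold Rabs; destruct Rcase_abs; lra].
  replace (2 * thmin / PI * Rabs (INR j - INR l)) with (2 * (Rabs (INR j - INR l) * thmin) / PI)
    by (field; lra).
  pose proof (th_sep_index j l Hj Hl). unfold Rdiv.
  apply Rmult_le_compat_r; [left; apply Rinv_0_lt_compat|]; lra.
Qed.

Lemma nodes_inj a b : (a < k)%nat -> (b < k)%nat -> a <> b -> z a <> z b.
Proof.
  intros Ha Hb Hab E. pose proof (node_dist_lower a b Ha Hb) as H.
  rewrite E in H. replace (Csub (z b) (z b)) with C0 in H by ring. rewrite Cmod_C0 in H.
  assert (0 < Rabs (INR a - INR b)).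
  { apply Rabs_pos_lt. intros Eab. apply Hab, INR_eq. lra. }
  pose proof thmin_pos. pose proof PI_3_4.
  assert (0 < 2 * thmin / PI) by (apply Rdiv_lt_0_compat; lra). nra.
Qed.

Lemma row_norm_bound j : (j < k)%nat ->
  Rsum k (fun q => Cmod (vander_inv z k j q)) <= PI ^ (k - 1) / (INR (zeta k) * thmin ^ (k - 1)).
Proof.
  intros Hj. pose proof PI_3_4. pose proof thmin_pos.
  set (c := 2 * thmin / PI).
  assert (Hc : 0 < c) by (unfold c; apply Rdiv_lt_0_compat; lra).
  assert (Hzeta : 0 < INR (zeta k)) by (apply lt_0_INR, zeta_pos).
  assert (Hnum : Rprod (map (fun l => 1 + Cmod (z l)) (others j k)) = 2 ^ (k - 1)).
  { rewrite (map_ext _ (fun _ => 2)) by (intros; unfold z; rewrite Cmod_expi; lra).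
    rewrite Rprod_const, others_length by exact Hj. reflexivity. }
  assert (Hden : c ^ (k - 1) * INR (zeta k) <=
                 Rprod (map (fun l => Cmod (Csub (z j) (z l))) (others j k))).
  { eapply Rle_trans; [|apply (Rprod_le _ (fun l => c * Rabs (INR j - INR l)))].
    - rewrite Rprod_scale, Rprod_dist_others, others_length by exact Hj.
      apply Rmult_le_compat_l; [apply pow_le; lra|]. apply le_INR, zeta_le_fact, Hj.
    - intros l Hl. apply (in_others _ _ _ Hj) in Hl as [Hl _].
      split; [apply Rmult_le_pos; [lra|apply Rabs_pos] | exact (node_dist_lower j l Hj Hl)]. }
  eapply Rle_trans; [exact (row_norm_vander_inv z k nodes_inj j Hj)|].
  rewrite Hnum. unfold Rdiv.
  apply Rle_trans with (2 ^ (k - 1) * / (c ^ (k - 1) * INR (zeta k))).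
  - apply Rmult_le_compat_l; [apply pow_le; lra|].
    apply Rinv_le_contravar; [apply Rmult_lt_0_compat; [apply pow_lt|]; lra | exact Hden].
  - right. unfold c, Rdiv. rewrite !Rpow_mult_distr, pow_inv.
    pose proof (pow_lt PI (k - 1) ltac:(lra)). pose proof (pow_lt thmin (k - 1) ltac:(lra)).
    pose proof (pow_lt 2 (k - 1) ltac:(lra)). field. lra.
Qed.

End UnitCircleNodes.

Theorem lemma3p3 (k : nat) (th : nat -> R) (thmin : R)
  (hk : (2 <= k)%nat)
  (hlo : - (PI / 2) <= th 0%nat)
  (hhi : th (k - 1)%nat <= PI / 2)
  (hinc : forall i, (i + 1 < k)%nat -> th i < th (i + 1)%nat)
  (hmin : is_min_sep k th thmin) :
  (exists W : Cmat, is_inverse k (Vand th) W) /\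
  (forall W : Cmat, is_inverse k (Vand th) W ->
     norm_inf k W <= PI ^ (k - 1) / (INR (zeta k) * thmin ^ (k - 1))).
Proof.
  set (z := fun l => Cexpi (th l)).
  assert (Hz : forall a b, (a < k)%nat -> (b < k)%nat -> a <> b -> z a <> z b)
    by exact (nodes_inj k th thmin hlo hhi hinc hmin).
  change (Vand th) with (vander z). split.
  - exists (vander_inv z k). exact (vander_inv_inverse z k Hz).
  - intros W HW. apply Rmax_upto_le.
    + pose proof PI_3_4. pose proof (thmin_pos k th thmin hinc hmin).
      pose proof (lt_0_INR _ (zeta_pos k)).
      apply Rlt_le, Rdiv_lt_0_compat; [apply pow_lt; lra|].
      apply Rmult_lt_0_compat; [|apply pow_lt]; lra.
    + intros j Hj.
      rewrite (Rsum_ext _ _ (fun q => Cmod (vander_inv z k j q)))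
        by (intros q Hq; rewrite (inverse_eq_vander_inv z k Hz W HW j q Hj Hq); reflexivity).
      exact (row_norm_bound k th thmin hlo hhi hinc hmin j Hj).
Qed.
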